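(* In the setting of the context, let $x\in(-3N,3N)$ be such that $f_N(x)\ge1$ and let $\varepsilon\in(0,1)$. Let $w\in W^{1,2}([-1,1])$ with $w(\pm1)=\pm f_N(x)$ and assume $H_x(w)\le H_x(v_N(x,\cdot))+\varepsilon$. Then there exists $C>0$ (uniform over the choice of $x$ and $\varepsilon$) such that $$\|w-v_N(x,\cdot)\|_{L^\infty([-1,1])}\le C\varepsilon^{1/2}.$$
   Context: Fix a small universal constant $\alpha\in(0,1)$ (e.g. $\alpha=1/10$). For $N>0$ define $f_N:[-3N,3N]\to\mathbb{R}$ by $f_N(x)=1-\alpha$ if $|x|\le N$, $f_N(x)=\frac{|x|(1+\alpha)}{N}-2\alpha$ if $N\le|x|\le2N$, $f_N(x)=2$ if $2N\le|x|\le3N$. For $x\in[-3N,3N]$ and $w\in W^{1,2}([-1,1])$, $H_x(w)=\int_{-1}^1(w'(y))^2dy+|\{w\ne0\}\cap[-1,1]|$, and $v_N(x,\cdot)$ is the unique minimizer of $H_x$ among $w\in W^{1,2}([-1,1])$ with $w(\pm1)=\pm f_N(x)$. *)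

From HB Require Import structures.
From mathcomp Require Import all_boot all_order all_algebra.
From mathcomp Require Import all_classical all_reals all_analysis.
Set Implicit Arguments. Unset Strict Implicit. Unset Printing Implicit Defensive.
Import Order.TTheory GRing.Theory Num.Theory.
Import numFieldNormedType.Exports.
Local Open Scope classical_set_scope.
Local Open Scope ring_scope.

Section defs.
Variable R : realType.
Let I11 : set R := `[-1, 1].

Definition fN (alpha N x : R) : R :=
  if `|x| <= N then 1 - alpha
  else if `|x| <= 2 * N then `|x| * (1 + alpha) / N - 2 * alpha
  else 2.

(* w belongs to W^{1,2}([-1,1]) with weak derivative g: g is square
   integrable on [-1,1] and w is the primitive of g on [-1,1]
   (1D characterization: W^{1,2} = absolutely continuous with L^2 derivative). *)
Definition W12 (w g : R -> R) : Prop :=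
  measurable_fun (`[-1, 1] : set R) g /\
  (lebesgue_measure : set R -> \bar R).-integrable I11 (fun y => ((g y) ^+ 2)%:E) /\
  (lebesgue_measure : set R -> \bar R).-integrable I11 (fun y => (g y)%:E) /\
  forall y, -1 <= y <= 1 ->
    w y = w (-1) + Rintegral lebesgue_measure (`[-1, y] : set R) g.

Definition Hx (w g : R -> R) : \bar R :=
  (\int[lebesgue_measure]_(y in I11) ((g y) ^+ 2)%:E
   + lebesgue_measure [set y : R | ((-1 <= y <= 1) /\ w y != 0)%R])%E.

Definition admissible (alpha N x : R) (w g : R -> R) : Prop :=
  W12 w g /\ w (-1) = - fN alpha N x /\ w 1 = fN alpha N x.

Definition is_minimizer (alpha N x : R) (v gv : R -> R) : Prop :=
  admissible alpha N x v gv /\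
  forall u gu, admissible alpha N x u gu -> (Hx v gv <= Hx u gu)%E.

End defs.

From HB Require Import structures.
From mathcomp Require Import all_boot all_order all_algebra.
From mathcomp Require Import all_classical all_reals all_analysis.
From mathcomp Require Import ring lra measurable_realfun.
Import Order.TTheory GRing.Theory Num.Theory.
Import numFieldNormedType.Exports.
Local Open Scope classical_set_scope.
Local Open Scope ring_scope.
Set Implicit Arguments. Unset Strict Implicit. Unset Printing Implicit Defensive.

(* Since f := fN alpha N x >= 1, the line y |-> f * y is admissible with
   energy 2 f^2 + 2, so both the minimiser v and the almost-minimiser w have
   energy at most 2 f^2 + 2 + eps; it suffices to show that every such
   competitor u stays within 6 sqrt eps of the line.  By Cauchy-Schwarz u is
   1/2-Hoelder, so it has a first zero t1 and a last zero t2 and does not vanish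
   on [-1, t1[ and ]t2, 1].  On [-1, t1] it rises by f, so its Dirichlet energy
   there is f^2 / p plus the L^2 deviation of u' from the slope f / p
   (p = t1 + 1); likewise on [t2, 1] with q = 1 - t2.  Against the budget
   2 f^2 + 2 + eps, the inequality
     f^2/p + f^2/q + p + q - 2 f^2 - 2 >= ((1 - p)^2 + (1 - q)^2) / 2
   (valid for f >= 1 and p + q <= 2) forces t1^2, t2^2, the energy on
   [t1, t2] and both slope deviations to be O(eps).  Cauchy-Schwarz again puts
   u within 2 sqrt eps of the piecewise linear profile through (-1, -f),
   (t1, 0), (t2, 0), (1, f), which is itself 4 sqrt eps-close to the line. *)

Section integral_on.
Variable R : realType.
Notation mu := (@lebesgue_measure R).
Implicit Types (a b c d k m s t x : R) (f g h : R -> R).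

Definition integrable_on a b h := mu.-integrable (`[a, b] : set R) (EFin \o h).
Definition integral_on a b h := \int[mu]_(x in `[a, b]) h x.

Lemma integrable_onS a b c d h :
  a <= c -> d <= b -> integrable_on a b h -> integrable_on c d h.
Proof.
by move=> ac db; apply: integrableS => //; apply: subset_itv; rewrite bnd_simp.
Qed.

Lemma integrable_on_cst a b k : integrable_on a b (fun=> k).
Proof.
apply/integrableP; split; first exact/measurable_EFinP.
rewrite integral_cst //= lebesgue_measure_itv /=.
by case: ifP => _; rewrite ?mule0 -?EFinD -?EFinM ltry.
Qed.

Lemma integrable_onD a b f g : integrable_on a b f -> integrable_on a b g ->
  integrable_on a b (fun x => f x + g x).
Proof. by move=> hf hg; apply: eq_integrable (integrableD _ hf hg). Qed.

Lemma integrable_onZ a b k f : integrable_on a b f ->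
  integrable_on a b (fun x => k * f x).
Proof. by move=> hf; apply: eq_integrable (integrableZl _ k hf). Qed.

Lemma integrable_on_sqrB a b c h : integrable_on a b h ->
  integrable_on a b (fun x => h x ^+ 2) ->
  integrable_on a b (fun x => (h x - c) ^+ 2).
Proof.
move=> ih ih2.
have := integrable_onD (integrable_onD ih2 (integrable_onZ (- (2 * c)) ih))
  (integrable_on_cst a b (c ^+ 2)).
by apply: eq_integrable => // x _ /=; congr (_%:E); ring.
Qed.

Lemma integral_on_cst a b k : a <= b -> integral_on a b (fun=> k) = k * (b - a).
Proof.
rewrite le_eqVlt => /predU1P[<-|ab].
  by rewrite /integral_on set_itv1 Rintegral_set1 subrr mulr0.
rewrite /integral_on Rintegral_cst //.
have := lebesgue_measure_itv `[a, b]%R; rewrite /= lte_fin ab => ->.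
by rewrite -EFinD.
Qed.

Lemma integral_onD a b f g : integrable_on a b f -> integrable_on a b g ->
  integral_on a b (fun x => f x + g x) = integral_on a b f + integral_on a b g.
Proof. by move=> hf hg; rewrite /integral_on RintegralD. Qed.

Lemma integral_onZ a b k f : integrable_on a b f ->
  integral_on a b (fun x => k * f x) = k * integral_on a b f.
Proof. by move=> hf; rewrite /integral_on RintegralZl. Qed.

Lemma integral_on_ge0 a b h : (forall x, a <= x <= b -> 0 <= h x) ->
  0 <= integral_on a b h.
Proof. by move=> h0; apply: Rintegral_ge0 => x /=; rewrite in_itv; apply: h0. Qed.

Lemma integral_on_sqr_ge0 a b h : 0 <= integral_on a b (fun x => h x ^+ 2).
Proof. by apply: integral_on_ge0 => x _; apply: sqr_ge0. Qed.

Lemma integral_on_split a m b h : a <= m -> m <= b -> integrable_on a b h ->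
  integral_on a b h = integral_on a m h + integral_on m b h.
Proof.
move=> am mb ih; have := @Rintegral_itvB R h (BLeft a) (BRight b) m ih.
rewrite !bnd_simp /integral_on => /(_ am mb).
rewrite Rintegral_itv_obnd_cbnd => [<-|]; first ring.
by apply: integrableS ih => //; apply: subset_itv; rewrite bnd_simp.
Qed.

Lemma integral_on_sqrB a b c h : a <= b -> integrable_on a b h ->
  integrable_on a b (fun x => h x ^+ 2) ->
  integral_on a b (fun x => (h x - c) ^+ 2) =
  integral_on a b (fun x => h x ^+ 2) - 2 * c * integral_on a b h + c ^+ 2 * (b - a).
Proof.
move=> ab ih ih2.
rewrite (_ : (fun x => _) = (fun x => (h x ^+ 2 + - (2 * c) * h x) + c ^+ 2));
  last by apply: funext => x; ring.
have ihZ := integrable_onZ (- (2 * c)) ih.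
rewrite integral_onD ?integral_onD ?integral_onZ ?integral_on_cst //; first ring.
all: by [exact: integrable_on_cst | exact: integrable_onD].
Qed.

Lemma integral_on_sqr_mean a b h : a < b -> integrable_on a b h ->
  integrable_on a b (fun x => h x ^+ 2) ->
  integral_on a b (fun x => h x ^+ 2) =
  integral_on a b (fun x => (h x - integral_on a b h / (b - a)) ^+ 2)
  + integral_on a b h ^+ 2 / (b - a).
Proof.
move=> ab ih ih2; rewrite integral_on_sqrB ?ltW //.
by field; rewrite subr_eq0 gt_eqF.
Qed.

Lemma integral_on_sqr_le a b h : a <= b -> integrable_on a b h ->
  integrable_on a b (fun x => h x ^+ 2) ->
  integral_on a b h ^+ 2 <= (b - a) * integral_on a b (fun x => h x ^+ 2).
Proof.
rewrite le_eqVlt => /predU1P[<- _ _|ab ih ih2].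
  by rewrite /integral_on set_itv1 !Rintegral_set1 expr0n subrr mulr0.
rewrite (integral_on_sqr_mean ab ih ih2) mulrDr mulrCA divff ?mulr1;
  last by rewrite subr_eq0 gt_eqF.
rewrite lerDr; apply: mulr_ge0; [lra | exact: integral_on_sqr_ge0].
Qed.

Lemma integral_on_sqr_subitv_le a b s t h : a <= s -> s <= t -> t <= b ->
  integrable_on a b (fun x => h x ^+ 2) ->
  integral_on s t (fun x => h x ^+ 2) <= integral_on a b (fun x => h x ^+ 2).
Proof.
move=> a_s st tb ih2.
rewrite (integral_on_split (b := b) a_s) ?(le_trans st tb) //.
rewrite (integral_on_split st tb); last exact: integrable_onS ih2.
by have := integral_on_sqr_ge0 a s h; have := integral_on_sqr_ge0 t b h; lra.
Qed.

Lemma integral_on_EFin a b h : integrable_on a b h ->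
  (\int[mu]_(x in `[a, b]) (h x)%:E)%E = (integral_on a b h)%:E.
Proof. by move=> ih; rewrite /integral_on /Rintegral fineK // integrable_fin_num. Qed.

End integral_on.

Section half_holder.
Variable R : realType.
Implicit Types (a b s t y G : R) (w : R -> R).

Definition half_holder a b G w :=
  forall s t, a <= s -> s <= t -> t <= b -> (w t - w s) ^+ 2 <= (t - s) * G.

Lemma half_holder_same_sign a b G w s t : half_holder a b G w ->
  a <= s -> s <= t -> t <= b -> (t - s) * (G + 1) < w s ^+ 2 + w t ^+ 2 ->
  0 < w s * w t.
Proof.
move=> hw a_s st tb close; rewrite ltNge; apply/negP => opposite.
have := hw s t a_s st tb.
have : (t - s) * G <= (t - s) * (G + 1) by rewrite ler_wpM2l ?subr_ge0 ?lerDl.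
nra.
Qed.

Lemma half_holder_sign_nbhd a b G w t : 0 <= G -> half_holder a b G w ->
  a <= t <= b -> w t != 0 ->
  exists2 eta, 0 < eta & forall y, a <= y <= b -> `|y - t| < eta -> 0 < w t * w y.
Proof.
move=> G0 hw /andP[a_t tb] wt0; exists (w t ^+ 2 / (G + 1)).
  by apply: divr_gt0; [rewrite exprn_even_gt0 | lra].
move=> y /andP[a_y yb]; rewrite ltr_pdivlMr; last lra.
move=> close; have wy2 := sqr_ge0 (w y).
have [ty|yt] := leP t y.
  rewrite ger0_norm ?subr_ge0 // in close.
  by apply: (half_holder_same_sign hw a_t ty yb); lra.
rewrite ltr0_norm ?subr_lt0 // opprB in close; rewrite mulrC.
by apply: (half_holder_same_sign hw a_y (ltW yt) tb); lra.
Qed.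

Lemma half_holder_reflect a b G w : half_holder a b G w ->
  half_holder (- b) (- a) G (fun y => - w (- y)).
Proof.
move=> hw s t bs st ta.
rewrite (_ : t - s = - s - - t); last by ring.
rewrite (_ : _ ^+ 2 = (w (- s) - w (- t)) ^+ 2); last by ring.
by apply: hw; lra.
Qed.

Lemma half_holder_first_zero a b G w : a <= b -> 0 <= G -> half_holder a b G w ->
  w a < 0 -> 0 < w b ->
  exists t, [/\ a < t, t <= b, w t = 0 & forall y, a <= y < t -> w y != 0].
Proof.
move=> ab G0 hw wa wb.
pose S := [set s | a <= s <= b /\ forall y, a <= y <= s -> w y < 0].
have Sa : S a.
  split=> [|y /andP[ay ya]]; first by rewrite lexx.
  by have -> : y = a by apply/le_anti; rewrite ay ya.
have hS : has_sup S by split; [exists a | exists b => s [/andP[]]].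
set t := sup S.
have ub := sup_upper_bound hS; have a_t : a <= t := ub a Sa.
have tb : t <= b by apply: ge_sup; [exists a | move=> s [/andP[]]].
have neg_before y : a <= y < t -> w y < 0.
  move=> /andP[ay yt]; have [|s [_ Ss] ys] := sup_adherent (_ : 0 < t - y) hS.
    by rewrite subr_gt0.
  by apply: Ss; rewrite ay /=; rewrite -/t in ys; lra.
have t_in : a <= t <= b by rewrite a_t tb.
have wt_le0 : w t <= 0.
  rewrite leNgt; apply/negP => wt_gt0.
  have [eta eta_gt0 near_t] := half_holder_sign_nbhd G0 hw t_in (lt0r_neq0 wt_gt0).
  have [s Ss ts] := sup_adherent eta_gt0 hS; rewrite -/t in ts.
  have [/andP[a_s s_b] neg_s] := Ss; have st : s <= t := ub s Ss.
  have := near_t s; rewrite a_s s_b distrC ger0_norm ?subr_ge0 // => /(_ isT).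
  by have := neg_s s; rewrite a_s lexx => /(_ isT); nra.
have wt_ge0 : 0 <= w t.
  rewrite leNgt; apply/negP => wt_lt0.
  have [eta eta_gt0 near_t] := half_holder_sign_nbhd G0 hw t_in (ltr0_neq0 wt_lt0).
  have tb' : t < b by rewrite lt_neqAle tb andbT; apply: contraTneq wt_lt0 => ->; lra.
  pose d := Num.min (b - t) (eta / 2).
  have d_gt0 : 0 < d by rewrite lt_min subr_gt0 tb' divr_gt0.
  have [db deta] : d <= b - t /\ d <= eta / 2 by split; rewrite ge_min lexx ?orbT.
  suff : S (t + d) by move/ub; rewrite -/t; lra.
  split=> [|y /andP[ay yd]]; first by apply/andP; split; lra.
  have [yt|ty] := ltP y t; first by apply: neg_before; rewrite ay yt.
  have : 0 < w t * w y.
    apply: near_t; first by rewrite ay /=; lra.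
    by rewrite ger0_norm ?subr_ge0 //; lra.
  nra.
have wt0 : w t = 0 by apply/le_anti; rewrite wt_le0 wt_ge0.
exists t; split=> // [|y /neg_before/ltr0_neq0 //].
by rewrite lt_neqAle a_t andbT; apply: contraTneq wa => ->; rewrite wt0 ltxx.
Qed.
Lemma half_holder_last_zero a b G w : a <= b -> 0 <= G -> half_holder a b G w ->
  w a < 0 -> 0 < w b ->
  exists t, [/\ a <= t, t < b, w t = 0 & forall y, t < y <= b -> w y != 0].
Proof.
move=> ab G0 hw wa wb.
have [|||s [bs sa ws nz]] :=
  half_holder_first_zero _ G0 (half_holder_reflect hw).
- by rewrite lerN2.
- by rewrite /= opprK oppr_lt0.
- by rewrite /= opprK oppr_gt0.
exists (- s); split; [lra | lra | by apply/eqP; rewrite -oppr_eq0 ws |].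
move=> y /andP[sy yb]; have := nz (- y); rewrite opprK oppr_eq0; apply.
by apply/andP; split; lra.
Qed.

End half_holder.

Section scalar_bounds.
Variable R : realType.
Implicit Types (a b d f k l p q r eps : R).

Lemma norm_le_sqrt a k eps : 0 <= k -> 0 <= eps -> a ^+ 2 <= k ^+ 2 * eps ->
  `|a| <= k * Num.sqrt eps.
Proof.
move=> k0 eps0 h; rewrite -sqrtr_sqr -[k]ger0_norm // -sqrtr_sqr -sqrtrM ?sqr_ge0 //.
exact: ler_wsqrtr.
Qed.

Lemma norm_add_le_sqrt a b k l eps : 0 <= k -> 0 <= l -> 0 <= eps ->
  a ^+ 2 <= k ^+ 2 * eps -> b ^+ 2 <= l ^+ 2 * eps ->
  `|a + b| <= (k + l) * Num.sqrt eps.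
Proof.
move=> k0 l0 eps0 ha hb; apply: le_trans (ler_normD _ _) _.
by rewrite mulrDl lerD // norm_le_sqrt.
Qed.

Lemma sqr_bounded_mul_le f r d eps : 0 <= f <= 2 -> 0 <= r <= 1 ->
  d ^+ 2 <= 2 * eps -> (f * r * d) ^+ 2 <= 4 ^+ 2 * eps.
Proof.
move=> /andP[f0 f2] /andP[r0 r1] hd; rewrite !exprMn.
have : (f * r) ^+ 2 <= 2 ^+ 2 by rewrite ler_pXn2r ?nnegrE ?mulr_ge0 //; nra.
rewrite exprMn; nra.
Qed.

Lemma ramp_energy_excess p q f : 0 < p -> 0 < q -> p + q <= 2 -> 1 <= f ->
  (1 - p) ^+ 2 / 2 + (1 - q) ^+ 2 / 2 <=
  f ^+ 2 / p + f ^+ 2 / q + p + q - 2 * f ^+ 2 - 2.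
Proof.
move=> p0 q0 pq f1.
have ramp (x : R) : 0 < x -> x <= 2 -> (1 - x) ^+ 2 / 2 <= x^-1 + x - 2.
  move=> x0 x2; rewrite (_ : x^-1 + x - 2 = (1 - x) ^+ 2 / x); last first.
    by field; rewrite gt_eqF.
  by rewrite ler_wpM2l ?sqr_ge0 // lef_pV2 ?posrE //; lra.
have inv_sum : 2 <= p^-1 + q^-1.
  rewrite (_ : p^-1 + q^-1 = (p + q) / (p * q)); last by field; rewrite !gt_eqF.
  rewrite ler_pdivlMr ?mulr_gt0 //.
  have : 0 <= (2 - (p + q)) * (p + q) by apply: mulr_ge0; lra.
  have := sqr_ge0 (p - q); nra.
have f2 : 1 <= f ^+ 2 by rewrite -[1](expr1n _ 2) ler_pXn2r ?nnegrE //; lra.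
have hp : (1 - p) ^+ 2 / 2 <= p^-1 + p - 2 by apply: ramp; lra.
have hq : (1 - q) ^+ 2 / 2 <= q^-1 + q - 2 by apply: ramp; lra.
have hf : 0 <= (f ^+ 2 - 1) * (p^-1 + q^-1 - 2) by apply: mulr_ge0; lra.
rewrite (_ : f ^+ 2 / p + f ^+ 2 / q + p + q - 2 * f ^+ 2 - 2 =
  (f ^+ 2 - 1) * (p^-1 + q^-1 - 2) + (p^-1 + p - 2) + (q^-1 + q - 2)); last by ring.
lra.
Qed.

End scalar_bounds.

Section primitive.
Variable R : realType.
Variables (a b : R) (w g : R -> R).
Implicit Types (c eps s t y : R).
Hypotheses (ig : integrable_on a b g) (ig2 : integrable_on a b (fun x => g x ^+ 2)).
Hypothesis w_prim : forall y, a <= y <= b -> w y = w a + integral_on a y g.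

Lemma primitive_sub s t : a <= s -> s <= t -> t <= b ->
  w t - w s = integral_on s t g.
Proof.
move=> a_s st tb; have a_t := le_trans a_s st; have s_b := le_trans st tb.
rewrite (w_prim (y := t)) ?a_t ?tb // (w_prim (y := s)) ?a_s ?s_b //.
by rewrite (integral_on_split a_s st) ?(integrable_onS _ tb ig) //; ring.
Qed.

Lemma primitive_half_holder :
  half_holder a b (integral_on a b (fun x => g x ^+ 2)) w.
Proof.
move=> s t a_s st tb; rewrite primitive_sub //.
apply: le_trans (integral_on_sqr_le st _ _) _;
  [exact: integrable_onS ig | exact: integrable_onS ig2 |].
by rewrite ler_wpM2l ?subr_ge0 // integral_on_sqr_subitv_le.
Qed.

Lemma primitive_dev_sqr_le s y t c eps : a <= s -> s <= y -> y <= t -> t <= b ->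
  integral_on s t (fun x => (g x - c) ^+ 2) <= eps ->
  (w y - w s - c * (y - s)) ^+ 2 <= (y - s) * eps.
Proof.
move=> a_s sy yt tb dev.
have igc : integrable_on s t (fun x => g x + - c).
  by apply: integrable_onD; [exact: integrable_onS ig | exact: integrable_on_cst].
have igc2 : integrable_on s t (fun x => (g x + - c) ^+ 2).
  by apply: integrable_on_sqrB; [exact: integrable_onS ig | exact: integrable_onS ig2].
rewrite (_ : _ - c * _ = integral_on s y (fun x => g x + - c)); last first.
  have y_b := le_trans yt tb; have igy := integrable_onS a_s y_b ig.
  rewrite integral_onD // ?integral_on_cst // ?primitive_sub //; first ring.
  exact: integrable_on_cst.
apply: le_trans (integral_on_sqr_le sy _ _) _;
  [exact: integrable_onS igc | exact: integrable_onS igc2 |].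
rewrite ler_wpM2l ?subr_ge0 //; apply: le_trans dev.
exact: integral_on_sqr_subitv_le (lexx s) sy yt igc2.
Qed.

End primitive.

Section near_linear.
Variable R : realType.
Variables (f eps : R) (u g : R -> R).
Implicit Types (c s t y : R).
Hypotheses (f_ge1 : 1 <= f) (f_le2 : f <= 2) (eps_ge0 : 0 <= eps).
Hypotheses (ig : integrable_on (-1) 1 g)
  (ig2 : integrable_on (-1) 1 (fun x => g x ^+ 2)).
Hypothesis u_prim : forall y, -1 <= y <= 1 -> u y = u (-1) + integral_on (-1) y g.
Hypotheses (u_m1 : u (-1) = - f) (u_1 : u 1 = f).
Hypothesis energy_le : forall t1 t2 : R, -1 <= t1 -> t1 <= t2 -> t2 <= 1 ->
  (forall y, -1 <= y < t1 -> u y != 0) -> (forall y, t2 < y <= 1 -> u y != 0) ->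
  integral_on (-1) 1 (fun x => g x ^+ 2) + (t1 + 1) + (1 - t2) <=
  2 * f ^+ 2 + 2 + eps.

Lemma energy_small (t1 t2 : R) : -1 < t1 -> t1 <= t2 -> t2 < 1 -> u t1 = 0 -> u t2 = 0 ->
  (forall y, -1 <= y < t1 -> u y != 0) -> (forall y, t2 < y <= 1 -> u y != 0) ->
  [/\ t1 ^+ 2 + t2 ^+ 2 <= 2 * eps,
      integral_on (-1) t1 (fun x => (g x - f / (t1 + 1)) ^+ 2) <= eps,
      integral_on t1 t2 (fun x => g x ^+ 2) <= eps &
      integral_on t2 1 (fun x => (g x - f / (1 - t2)) ^+ 2) <= eps].
Proof.
move=> t1m t12 t21 ut1 ut2 nz1 nz2.
have energy := energy_le (ltW t1m) t12 (ltW t21) nz1 nz2.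
have int_left : integral_on (-1) t1 g = f.
  by rewrite -(primitive_sub ig u_prim) ?ut1 ?u_m1 ?opprK //; lra.
have int_right : integral_on t2 1 g = f.
  by rewrite -(primitive_sub ig u_prim) ?ut2 ?u_1 ?subr0 //; lra.
have m1_t1 : -1 <= t1 by lra.
have t1_1 : t1 <= 1 by lra.
have m1_t2 : -1 <= t2 by lra.
have t2_1 : t2 <= 1 by lra.
have left := integral_on_sqr_mean t1m (integrable_onS (lexx _) t1_1 ig)
  (integrable_onS (lexx _) t1_1 ig2).
have right := integral_on_sqr_mean t21 (integrable_onS m1_t2 (lexx _) ig)
  (integrable_onS m1_t2 (lexx _) ig2).
rewrite int_left (_ : t1 - -1 = t1 + 1) in left; last by ring.
rewrite int_right in right.
move: energy; rewrite (integral_on_split (m := t1)) //.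
rewrite (integral_on_split (a := t1) (m := t2)) //; last exact: integrable_onS ig2.
rewrite left right.
have p_gt0 : 0 < t1 + 1 by lra.
have q_gt0 : 0 < 1 - t2 by lra.
have pq_le2 : t1 + 1 + (1 - t2) <= 2 by lra.
have excess := ramp_energy_excess p_gt0 q_gt0 pq_le2 f_ge1.
have E1_ge0 : 0 <= integral_on (-1) t1 (fun x => (g x - f / (t1 + 1)) ^+ 2).
  exact: integral_on_sqr_ge0.
have Em_ge0 := integral_on_sqr_ge0 t1 t2 g.
have E2_ge0 : 0 <= integral_on t2 1 (fun x => (g x - f / (1 - t2)) ^+ 2).
  exact: integral_on_sqr_ge0.
have t1_sq := sqr_ge0 t1; have t2_sq := sqr_ge0 t2.
by move=> energy; split; lra.
Qed.

Lemma chord_dev_sqr_le s y t c : -1 <= s -> s <= y -> y <= t -> t <= 1 ->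
  integral_on s t (fun x => (g x - c) ^+ 2) <= eps ->
  (u y - u s - c * (y - s)) ^+ 2 <= 2 ^+ 2 * eps.
Proof.
move=> m1_s sy yt t_1 dev.
apply: le_trans (primitive_dev_sqr_le ig ig2 u_prim m1_s sy yt t_1 dev) _.
by rewrite ler_wpM2r //; lra.
Qed.

Lemma near_linear_of_zeros (t1 t2 : R) y : -1 < t1 -> t1 <= t2 -> t2 < 1 ->
  u t1 = 0 -> u t2 = 0 ->
  (forall y, -1 <= y < t1 -> u y != 0) -> (forall y, t2 < y <= 1 -> u y != 0) ->
  -1 <= y <= 1 -> `|u y - f * y| <= 6 * Num.sqrt eps.
Proof.
move=> m1_t1 t12 t2_1 ut1 ut2 nz1 nz2 /andP[m1_y y_1].
have [ends dev_left dev_mid dev_right] := energy_small m1_t1 t12 t2_1 ut1 ut2 nz1 nz2.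
have f02 : 0 <= f <= 2 by rewrite f_le2 (le_trans ler01).
(* On each piece, u y - f * y is the deviation of u from its chord, bounded
   by [chord_dev_sqr_le], plus the gap between the chord and the line, of size
   |t1| or |t2|. *)
rewrite (_ : 6 = 2 + 4); last by lra.
have [y_t1|t1_y] := leP y t1.
  rewrite (_ : u y - f * y = (u y - u (-1) - f / (t1 + 1) * (y - -1))
                       + f * ((y + 1) / (t1 + 1)) * (- t1)); last first.
    by rewrite u_m1; field; rewrite lt0r_neq0 //; lra.
  apply: norm_add_le_sqrt => //; first by apply: (chord_dev_sqr_le (t := t1)) => //; lra.
  apply: sqr_bounded_mul_le => //; last by rewrite sqrrN; nra.
  by rewrite divr_ge0 ?ler_pdivrMr ?mul1r /=; lra.
have [y_t2|t2_y] := leP y t2.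
  rewrite (_ : u y - f * y = (u y - u t1 - 0 * (y - t1)) + f * 1 * (- y)); last first.
    by rewrite ut1; ring.
  apply: norm_add_le_sqrt => //.
    apply: (chord_dev_sqr_le (t := t2)) => //; [lra | lra | lra |].
    suff -> : (fun x => (g x - 0) ^+ 2) = (fun x => g x ^+ 2) by [].
    by apply/funext => x; rewrite subr0.
  apply: sqr_bounded_mul_le => //; first lra.
  by rewrite sqrrN; have [y0|y0] := leP 0 y; nra.
rewrite (_ : u y - f * y = (u y - u t2 - f / (1 - t2) * (y - t2))
                     + f * ((1 - y) / (1 - t2)) * (- t2)); last first.
  by rewrite ut2; field; rewrite lt0r_neq0 //; lra.
apply: norm_add_le_sqrt => //; first by apply: (chord_dev_sqr_le (t := 1)) => //; lra.
apply: sqr_bounded_mul_le => //; last by rewrite sqrrN; nra.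
by rewrite divr_ge0 ?ler_pdivrMr ?mul1r /=; lra.
Qed.

Lemma near_linear y : -1 <= y <= 1 -> `|u y - f * y| <= 6 * Num.sqrt eps.
Proof.
have hu := primitive_half_holder ig ig2 u_prim.
have G_ge0 := integral_on_sqr_ge0 (-1) 1 g.
have f_gt0 : 0 < f := lt_le_trans ltr01 f_ge1.
have um1_lt0 : u (-1) < 0 by rewrite u_m1 oppr_lt0.
have u1_gt0 : 0 < u 1 by rewrite u_1.
have m1_1 : (-1 : R) <= 1 by lra.
have [t1 [m1_t1 _ ut1 nz1]] := half_holder_first_zero m1_1 G_ge0 hu um1_lt0 u1_gt0.
have [t2 [m1_t2 t2_1 ut2 nz2]] := half_holder_last_zero m1_1 G_ge0 hu um1_lt0 u1_gt0.
have t12 : t1 <= t2.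
  rewrite leNgt; apply/negP => t21.
  suff : u t2 != 0 by rewrite ut2 eqxx.
  by apply: nz1; apply/andP; split; lra.
exact: near_linear_of_zeros m1_t1 t12 t2_1 ut1 ut2 nz1 nz2.
Qed.

End near_linear.

Section Hx_bounds.
Variable R : realType.
Notation mu := (@lebesgue_measure R).
Implicit Types (a b y B : R) (u g : R -> R).

Lemma lebesgue_measure_le (A B : set R) : A `<=` B -> (mu A <= mu B)%E.
Proof.
move=> AB.
rewrite /lebesgue_measure /lebesgue_stieltjes_measure /measure_extension.
exact: le_outer_measure.
Qed.

Lemma lebesgue_measure_itv_le a b (l r : bool) : a <= b ->
  mu [set` Interval (BSide l a) (BSide r b)] = (b - a)%:E.
Proof.
rewrite le_eqVlt => /predU1P[<-|ab]; rewrite lebesgue_measure_itv /=.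
  by rewrite subrr; case: l r => [] []; rewrite /= ?bnd_simp ?ltxx.
by rewrite lte_fin; case: l r => [] []; rewrite /= ?bnd_simp ?ab // -EFinD.
Qed.

Lemma lebesgue_measure_zero_free u (t1 t2 : R) : -1 <= t1 -> t1 <= t2 -> t2 <= 1 ->
  (forall y, -1 <= y < t1 -> u y != 0) -> (forall y, t2 < y <= 1 -> u y != 0) ->
  ((t1 + 1 + (1 - t2))%:E <= mu [set y : R | ((-1 <= y <= 1) /\ u y != 0)%R])%E.
Proof.
move=> m1_t1 t12 t2_1 nz1 nz2.
pose L : set R := [set` `[-1, t1[%R]; pose J : set R := [set` `]t2, 1]%R].
apply: (@le_trans _ _ (mu (L `|` J))).
  have disj : L `&` J = set0.
    apply/seteqP; split=> // y [].
    by rewrite /L /J /= !in_itv /= => /andP[_ ?] /andP[? _]; lra.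
  have -> : mu (L `|` J) = (mu L + mu J)%E.
    by apply: measureU => //; apply: measurable_itv.
  have -> : mu L = (t1 - -1)%:E by apply: lebesgue_measure_itv_le.
  have -> : mu J = (1 - t2)%:E by apply: lebesgue_measure_itv_le.
  by rewrite -EFinD lee_fin; lra.
apply: (@lebesgue_measure_le (L `|` J)) => y [];
  rewrite /L /J /= in_itv /= => /andP[y1 y2].
  by split; [apply/andP; split; lra | apply: nz1; rewrite y1 y2].
by split; [apply/andP; split; lra | apply: nz2; rewrite y1 y2].
Qed.

Lemma integrable_on_of_sqr a b g : measurable_fun (`[a, b] : set R) g ->
  integrable_on a b (fun x => g x ^+ 2) -> integrable_on a b g.
Proof.
move=> mg ig2; have ig2' := integrable_onD (integrable_on_cst a b 1) ig2.
apply: le_integrable ig2' => //; first exact/measurable_EFinP.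
move=> x _ /=; rewrite lee_fin; apply: le_trans (ler_norm _).
rewrite -real_normK ?num_real //.
by have := sqr_ge0 (`|g x| - 1); have := sqr_ge0 `|g x|; lra.
Qed.

Lemma Hx_integrable u g B : W12 u g -> (Hx u g <= B%:E)%E ->
  integrable_on (-1) 1 g /\ integrable_on (-1) 1 (fun x => g x ^+ 2).
Proof.
move=> [mg _] HB.
suff ig2 : integrable_on (-1) 1 (fun x => g x ^+ 2).
  by split; first exact: integrable_on_of_sqr.
apply/integrableP; split; first exact/measurable_EFinP/measurable_funX.
have -> : (\int[mu]_(x in `[(-1)%R, 1%R]) `|(EFin \o (fun x => (g x ^+ 2)%R)) x|)%E =
          (\int[mu]_(x in `[(-1)%R, 1%R]) ((g x ^+ 2)%R)%:E)%E.
  by apply: eq_integral => x _ /=; rewrite ger0_norm // sqr_ge0.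
apply: le_lt_trans (ltry B); apply: le_trans HB.
by apply: leeDl; apply: measure_ge0.
Qed.

Lemma Hx_energy_le u g B : integrable_on (-1) 1 (fun x => g x ^+ 2) ->
  (Hx u g <= B%:E)%E -> forall t1 t2 : R, -1 <= t1 -> t1 <= t2 -> t2 <= 1 ->
  (forall y, -1 <= y < t1 -> u y != 0) -> (forall y, t2 < y <= 1 -> u y != 0) ->
  integral_on (-1) 1 (fun x => g x ^+ 2) + (t1 + 1) + (1 - t2) <= B.
Proof.
move=> ig2 HB t1 t2 m1_t1 t12 t2_1 nz1 nz2.
move: HB; rewrite /Hx integral_on_EFin // => HB.
rewrite -lee_fin -addrA EFinD; apply: le_trans HB.
by apply: leeD2l; apply: lebesgue_measure_zero_free.
Qed.

Lemma near_linear_of_Hx f eps u g : 1 <= f -> f <= 2 -> 0 <= eps -> W12 u g ->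
  u (-1) = - f -> u 1 = f -> (Hx u g <= (2 * f ^+ 2 + 2 + eps)%:E)%E ->
  forall y, -1 <= y <= 1 -> `|u y - f * y| <= 6 * Num.sqrt eps.
Proof.
move=> f_ge1 f_le2 eps_ge0 Wu u_m1 u_1 HB.
have [ig ig2] := Hx_integrable Wu HB.
have [_ [_ [_ u_prim]]] := Wu.
exact: near_linear f_ge1 f_le2 eps_ge0 ig ig2 u_prim u_m1 u_1 (Hx_energy_le ig2 HB).
Qed.

End Hx_bounds.

(* In [W12], integrability refers to the canonical measurable structure of [R]
   itself, which differs from [measurableTypeR R], the domain of
   [lebesgue_measure], by its display; this alias makes Lebesgue measure a
   measure there too. *)
Definition lebesgue_measure_R (R : realType) : set R -> \bar R := lebesgue_measure.
HB.instance Definition _ (R : realType) :=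
  isMeasure.Build default_measure_display R R (@lebesgue_measure_R R)
    (measure0 (@lebesgue_measure R)) (measure_ge0 (@lebesgue_measure R))
    (@measure_semi_sigma_additive _ _ _ (@lebesgue_measure R)).

Section linear_competitor.
Variable R : realType.
Notation mu := (@lebesgue_measure R).
Implicit Types (alpha N x f : R).

Lemma integrable_cst_R (a b k : R) :
  (lebesgue_measure : set R -> \bar R).-integrable (`[a, b] : set R) (fun _ => k%:E).
Proof.
change ((@lebesgue_measure_R R).-integrable (`[a, b] : set R) (fun _ => k%:E)).
apply/integrableP; split; first exact: measurable_cst.
rewrite (@integral_cst _ _ _ (@lebesgue_measure_R R) _ (measurable_itv `[a, b]%R)) /=.
have -> : lebesgue_measure_R `[a, b] = mu [set` `[a, b]%R] by [].
rewrite lebesgue_measure_itv /=.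
by case: ifP => _; rewrite ?mule0 -?EFinD -?EFinM ltry.
Qed.

Lemma W12_linear f : W12 (fun y => f * y) (fun=> f).
Proof.
split; first exact: measurable_cst.
split; first exact: integrable_cst_R.
split; first exact: integrable_cst_R.
move=> y /andP[m1_y _].
have -> : Rintegral mu (`[-1, y] : set R) (fun=> f) = f * (y - -1).
  exact: integral_on_cst.
by ring.
Qed.

Lemma Hx_linear f : (Hx (fun y => (f * y)%R) (fun=> f) <= (2 * f ^+ 2 + 2)%:E)%E.
Proof.
have m1_1 : (-1 : R) <= 1 by lra.
rewrite /Hx integral_on_EFin; last exact: integrable_on_cst.
rewrite (integral_on_cst _ m1_1) EFinD; apply: leeD; first by rewrite lee_fin; lra.
have -> : 2%E = mu [set` `[-1, 1]%R] :> \bar R.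
  by rewrite lebesgue_measure_itv_le // opprK.
by apply: lebesgue_measure_le => y [/= ? _]; rewrite in_itv.
Qed.

Lemma fN_le2 alpha N x : 0 < alpha -> 0 < N -> fN alpha N x <= 2.
Proof.
move=> alpha_gt0 N_gt0; rewrite /fN; case: ifP => _; first lra.
case: ifP => x_le2N; last lra.
suff : `|x| * (1 + alpha) / N <= 2 * (1 + alpha) by lra.
rewrite ler_pdivrMr // mulrAC ler_wpM2r //; lra.
Qed.

Lemma admissible_linear alpha N x :
  admissible alpha N x (fun y => fN alpha N x * y) (fun=> fN alpha N x).
Proof. by split; [exact: W12_linear | rewrite mulrN1 mulr1]. Qed.

End linear_competitor.

Theorem lemma3p6 (R : realType) (alpha N : R) :
  0 < alpha < 1 -> 0 < N ->
  exists C : R, 0 < C /\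
    forall (x eps : R) (w gw v gv : R -> R),
      - (3 * N) < x < 3 * N ->
      1 <= fN alpha N x ->
      0 < eps < 1 ->
      admissible alpha N x w gw ->
      is_minimizer alpha N x v gv ->
      (Hx w gw <= Hx v gv + eps%:E)%E ->
      forall y, -1 <= y <= 1 -> `|w y - v y| <= C * Num.sqrt eps.
Proof.
move=> /andP[alpha_gt0 _] N_gt0; exists 12; split=> [|x eps w gw v gv _]; first lra.
move=> f_ge1 /andP[eps_gt0 _] [Ww [w_m1 w_1]] [[Wv [v_m1 v_1]] v_min] Hw y y_in.
have f_le2 := fN_le2 x alpha_gt0 N_gt0.
have H_lin := le_trans (v_min _ _ (admissible_linear alpha N x)) (Hx_linear _).
set f := fN alpha N x in f_ge1 f_le2 w_m1 w_1 v_m1 v_1 H_lin.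
have eps_ge0 := ltW eps_gt0.
have Hv : (Hx v gv <= (2 * f ^+ 2 + 2 + eps)%:E)%E.
  by apply: le_trans H_lin _; rewrite lee_fin lerDl.
have Hw' : (Hx w gw <= (2 * f ^+ 2 + 2 + eps)%:E)%E.
  by apply: le_trans Hw _; rewrite EFinD leeD2r.
have := near_linear_of_Hx f_ge1 f_le2 eps_ge0 Ww w_m1 w_1 Hw' y_in.
have := near_linear_of_Hx f_ge1 f_le2 eps_ge0 Wv v_m1 v_1 Hv y_in.
rewrite (_ : w y - v y = (w y - f * y) - (v y - f * y)); last by ring.
by have := ler_normB (w y - f * y) (v y - f * y); lra.
Qed.
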